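(* Let $(\mathcal C,\otimes,I)$ be a symmetric closed monoidal category and $M$ a commutative monad on $\mathcal C$. For each symmetric Eilenberg--Moore $M$-monoid of the shape $\langle MA,\mu_A,m,u\rangle$, let $s=m\circ(\mathrm{id}_{MA}\otimes\eta_A): MA\otimes A\to MA$. Then $\Lambda(s): MA\to(A\Rightarrow MA)$ (i) is a morphism of symmetric Eilenberg--Moore $M$-monoids $\langle MA,\mu_A,m,u\rangle\to\langle A\Rightarrow MA,\ \Lambda(q),\ \mathsf{kcomp},\ \mathsf{kident}\rangle$, and (ii) is a split monomorphism in $\mathcal C$, i.e. there exists $r:(A\Rightarrow MA)\to MA$ with $r\circ\Lambda(s)=\mathrm{id}_{MA}$.
   Context: Symmetry $\mathsf{sym}:X\otimes Y\to Y\otimes X$; structural isomorphisms written $\cong$. Closed: $(-)\otimes B\dashv B\Rightarrow(-)$, currying $\Lambda:\mathcal C(X\otimes B,C)\cong\mathcal C(X,B\Rightarrow C)$, counit $\mathsf{app}$. $M$ has strength $\tau_{X,Y}:MX\otimes Y\to M(X\otimes Y)$ and left strength $\tau'_{X,Y}=M\mathsf{sym}\circ\tau_{Y,X}\circ\mathsf{sym}: X\otimes MY\to M(X\otimes Y)$; commutativity means $\mu\circ M\tau\circ\tau'=\mu\circ M\tau'\circ\tau$. $q=\mu_A\circ M\mathsf{app}\circ\tau: M(A\Rightarrow MA)\otimes A\to MA$. $\mathsf{kcomp}=\Lambda(w):(A\Rightarrow MA)\otimes(A\Rightarrow MA)\to(A\Rightarrow MA)$ where $w=\mu_A\circ M\mathsf{app}\circ\tau'\circ(\mathrm{id}\otimes\mathsf{app})\circ\cong:((A\Rightarrow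 MA)\otimes(A\Rightarrow MA))\otimes A\to MA$, and $\mathsf{kident}=\Lambda(\eta_A\circ\cong): I\to(A\Rightarrow MA)$ with $\cong: I\otimes A\to A$. A symmetric Eilenberg--Moore $M$-monoid is a tuple $\langle E,a: ME\to E,m: E\otimes E\to E,u: I\to E\rangle$ with $\langle E,a\rangle$ an Eilenberg--Moore $M$-algebra, $\langle E,m,u\rangle$ a monoid, and $a\circ Mm\circ\mu_{E\otimes E}\circ M\tau'_{E,E}\circ\tau_{E,ME}=m\circ(a\otimes a)$. A morphism of such is a $\mathcal C$-morphism that is both an $M$-algebra morphism and a monoid morphism. *)

(* Hom-sets are types and equality of morphisms is Leibniz equality. *)
Set Implicit Arguments.
Unset Strict Implicit.
Set Universe Polymorphism.

Record Category := {
  ob :> Type;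
  hom : ob -> ob -> Type;
  idm : forall x, hom x x;
  comp : forall x y z, hom y z -> hom x y -> hom x z;
  comp_idl : forall x y (f : hom x y), comp (idm y) f = f;
  comp_idr : forall x y (f : hom x y), comp f (idm x) = f;
  comp_assoc : forall x y z w (f : hom x y) (g : hom y z) (h : hom z w),
      comp h (comp g f) = comp (comp h g) f
}.
Arguments hom {c} x y.
Arguments idm {c} x.
Arguments comp {c x y z} g f.

Declare Scope cat_scope.
Open Scope cat_scope.
Notation "g ∘ f" := (comp g f) (at level 40, left associativity) : cat_scope.

(* Symmetric closed monoidal category structure on C.
   alpha : (X ⊗ Y) ⊗ Z -> X ⊗ (Y ⊗ Z), lam : I ⊗ X -> X, rho : X ⊗ I -> X,
   sym : X ⊗ Y -> Y ⊗ X;  (-) ⊗ B ⊣ B ⇒ (-) with counit app and currying Λ. *)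
Record SymClosedMonoidal (C : Category) := {
  tens : C -> C -> C;
  tensf : forall a b c d, hom a b -> hom c d -> hom (tens a c) (tens b d);
  unitI : C;
  alpha : forall x y z, hom (tens (tens x y) z) (tens x (tens y z));
  alpha_inv : forall x y z, hom (tens x (tens y z)) (tens (tens x y) z);
  lam : forall x, hom (tens unitI x) x;
  lam_inv : forall x, hom x (tens unitI x);
  rho : forall x, hom (tens x unitI) x;
  rho_inv : forall x, hom x (tens x unitI);
  sym : forall x y, hom (tens x y) (tens y x);
  expo : C -> C -> C;                          (* B ⇒ C is expo B C *)
  app : forall b c, hom (tens (expo b c) b) c;
  curry : forall x b c, hom (tens x b) c -> hom x (expo b c);
  tensf_id : forall a b, tensf (idm a) (idm b) = idm (tens a b);
  tensf_comp : forall a b c a' b' c' (f : hom a b) (g : hom b c)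
      (f' : hom a' b') (g' : hom b' c'),
      tensf (g ∘ f) (g' ∘ f') = tensf g g' ∘ tensf f f';
  alpha_iso1 : forall x y z, alpha_inv x y z ∘ alpha x y z = idm _;
  alpha_iso2 : forall x y z, alpha x y z ∘ alpha_inv x y z = idm _;
  lam_iso1 : forall x, lam_inv x ∘ lam x = idm _;
  lam_iso2 : forall x, lam x ∘ lam_inv x = idm _;
  rho_iso1 : forall x, rho_inv x ∘ rho x = idm _;
  rho_iso2 : forall x, rho x ∘ rho_inv x = idm _;
  alpha_nat : forall x x' y y' z z' (f : hom x x') (g : hom y y') (h : hom z z'),
      alpha x' y' z' ∘ tensf (tensf f g) h = tensf f (tensf g h) ∘ alpha x y z;
  lam_nat : forall x x' (f : hom x x'), lam x' ∘ tensf (idm unitI) f = f ∘ lam x;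
  rho_nat : forall x x' (f : hom x x'), rho x' ∘ tensf f (idm unitI) = f ∘ rho x;
  sym_nat : forall x x' y y' (f : hom x x') (g : hom y y'),
      sym x' y' ∘ tensf f g = tensf g f ∘ sym x y;
  pentagon : forall w x y z,
      alpha w x (tens y z) ∘ alpha (tens w x) y z
      = tensf (idm w) (alpha x y z) ∘ alpha w (tens x y) z
        ∘ tensf (alpha w x y) (idm z);
  triangle : forall x y,
      tensf (idm x) (lam y) ∘ alpha x unitI y = tensf (rho x) (idm y);
  sym_inv : forall x y, sym y x ∘ sym x y = idm (tens x y);
  hexagon : forall x y z,
      alpha y z x ∘ sym x (tens y z) ∘ alpha x y z
      = tensf (idm y) (sym x z) ∘ alpha y x z ∘ tensf (sym x y) (idm z);
  curry_beta : forall x b c (f : hom (tens x b) c),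
      app b c ∘ tensf (curry f) (idm b) = f;
  curry_eta : forall x b c (g : hom x (expo b c)),
      curry (app b c ∘ tensf g (idm b)) = g
}.
Arguments tens {C} s x y.
Arguments tensf {C} s {a b c d} f g.
Arguments unitI {C} s.
Arguments alpha {C} s x y z.
Arguments alpha_inv {C} s x y z.
Arguments lam {C} s x.
Arguments lam_inv {C} s x.
Arguments rho {C} s x.
Arguments rho_inv {C} s x.
Arguments sym {C} s x y.
Arguments expo {C} s b c.
Arguments app {C} s b c.
Arguments curry {C} s {x b c} f.

Record StrongMonad (C : Category) (S : SymClosedMonoidal C) := {
  Mo : C -> C;
  Mf : forall x y, hom x y -> hom (Mo x) (Mo y);
  eta : forall x, hom x (Mo x);
  mu : forall x, hom (Mo (Mo x)) (Mo x);
  tau : forall x y, hom (tens S (Mo x) y) (Mo (tens S x y));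
  Mf_id : forall x, Mf (idm x) = idm (Mo x);
  Mf_comp : forall x y z (f : hom x y) (g : hom y z), Mf (g ∘ f) = Mf g ∘ Mf f;
  eta_nat : forall x y (f : hom x y), eta y ∘ f = Mf f ∘ eta x;
  mu_nat : forall x y (f : hom x y), mu y ∘ Mf (Mf f) = Mf f ∘ mu x;
  mu_assoc : forall x, mu x ∘ Mf (mu x) = mu x ∘ mu (Mo x);
  mu_eta_l : forall x, mu x ∘ eta (Mo x) = idm (Mo x);
  mu_eta_r : forall x, mu x ∘ Mf (eta x) = idm (Mo x);
  tau_nat : forall x x' y y' (f : hom x x') (g : hom y y'),
      tau x' y' ∘ tensf S (Mf f) g = Mf (tensf S f g) ∘ tau x y;
  tau_unit : forall x, Mf (rho S x) ∘ tau x (unitI S) = rho S (Mo x);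
  tau_assoc : forall x y z,
      tau x (tens S y z) ∘ alpha S (Mo x) y z
      = Mf (alpha S x y z) ∘ tau (tens S x y) z ∘ tensf S (tau x y) (idm z);
  tau_eta : forall x y, tau x y ∘ tensf S (eta x) (idm y) = eta (tens S x y);
  tau_mu : forall x y,
      tau x y ∘ tensf S (mu x) (idm y)
      = mu (tens S x y) ∘ Mf (tau x y) ∘ tau (Mo x) y
}.
Arguments Mo {C S} s x.
Arguments Mf {C S} s {x y} f.
Arguments eta {C S} s x.
Arguments mu {C S} s x.
Arguments tau {C S} s x y.

Section Defs.
Context {C : Category} {S : SymClosedMonoidal C} (M : StrongMonad S).

Definition tau' (x y : C) : hom (tens S x (Mo M y)) (Mo M (tens S x y)) :=
  Mf M (sym S y x) ∘ tau M y x ∘ sym S x (Mo M y).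

Definition commutative_monad : Prop :=
  forall x y : C,
    mu M (tens S x y) ∘ Mf M (tau M x y) ∘ tau' (Mo M x) y
    = mu M (tens S x y) ∘ Mf M (tau' x y) ∘ tau M x (Mo M y).

Definition is_EM_algebra (E : C) (a : hom (Mo M E) E) : Prop :=
  a ∘ eta M E = idm E /\ a ∘ Mf M a = a ∘ mu M E.

Definition is_monoid (E : C) (m : hom (tens S E E) E) (u : hom (unitI S) E)
  : Prop :=
  m ∘ tensf S m (idm E) = m ∘ tensf S (idm E) m ∘ alpha S E E E /\
  m ∘ tensf S u (idm E) = lam S E /\
  m ∘ tensf S (idm E) u = rho S E.

Definition is_sym_EM_monoid (E : C) (a : hom (Mo M E) E)
  (m : hom (tens S E E) E) (u : hom (unitI S) E) : Prop :=
  is_EM_algebra a /\ is_monoid m u /\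
  a ∘ Mf M m ∘ mu M (tens S E E) ∘ Mf M (tau' E E) ∘ tau M E (Mo M E)
  = m ∘ tensf S a a.

Definition sym_EM_monoid_morphism (E : C) (a : hom (Mo M E) E)
  (m : hom (tens S E E) E) (u : hom (unitI S) E)
  (E' : C) (a' : hom (Mo M E') E')
  (m' : hom (tens S E' E') E') (u' : hom (unitI S) E') (f : hom E E') : Prop :=
  is_sym_EM_monoid a m u /\ is_sym_EM_monoid a' m' u' /\
  f ∘ a = a' ∘ Mf M f /\
  f ∘ m = m' ∘ tensf S f f /\ f ∘ u = u'.

Variable A : C.

Definition KA : C := expo S A (Mo M A).

Definition qK : hom (tens S (Mo M KA) A) (Mo M A) :=
  mu M A ∘ Mf M (app S A (Mo M A)) ∘ tau M KA A.

Definition wK : hom (tens S (tens S KA KA) A) (Mo M A) :=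
  mu M A ∘ Mf M (app S A (Mo M A)) ∘ tau' KA A
  ∘ tensf S (idm KA) (app S A (Mo M A)) ∘ alpha S KA KA A.

Definition kcomp : hom (tens S KA KA) KA := curry S wK.

Definition kident : hom (unitI S) KA := curry S (eta M A ∘ lam S A).

End Defs.
Arguments tau' {C S} M x y.
Arguments commutative_monad {C S} M.
Arguments is_EM_algebra {C S} M {E} a.
Arguments is_monoid {C S} {E} m u.
Arguments is_sym_EM_monoid {C S} M {E} a m u.
Arguments sym_EM_monoid_morphism {C S} M {E} a m u {E'} a' m' u' f.
Arguments KA {C S} M A.
Arguments qK {C S} M A.
Arguments wK {C S} M A.
Arguments kcomp {C S} M A.
Arguments kident {C S} M A.

(* The exponential A ⇒ MA carries the Kleisli monoid structure (Kleisli
   composition, unit η) and the pointwise EM algebra Λ(q) inherited from the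
   free algebra MA; commutativity of M is exactly what makes Λ(q) compatible
   with Kleisli composition, so A ⇒ MA is a symmetric EM M-monoid.  On the
   free algebra MA the symmetric-monoid axioms force m = μ ∘ M s ∘ τ', i.e. m
   is the Kleisli extension of s = m ∘ (id ⊗ η) in its second argument.  Hence
   Λ(s), x ↦ (a ↦ m(x, η a)), preserves all the structure, and applying the
   Kleisli extension of a map to the unit u retracts it, as m(x, u) = x. *)

From Corelib Require Import ssreflect ssrfun ssrbool.
Set Implicit Arguments.
Unset Strict Implicit.
Set Universe Polymorphism.

(* Composites are kept left-associated.  [crw H] rewrites with an equation
   [H] between composites that may occur as a prefix of a longer composite:
   [H] is first whiskered by an arbitrary postcomposition [k ∘ _].  Plain
   [rewrite ->] is used on purpose: ssreflect's [rewrite] matches up to delta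
   and would unfold [tau'] (itself a composite) while reassociating. *)
Ltac assoc := repeat rewrite -> comp_assoc.
Ltac whiskered k t :=
  lazymatch t with
  | ?a ∘ ?b => let a' := whiskered k a in constr:(a' ∘ b)
  | _ => constr:(k ∘ t)
  end.
Ltac crw H :=
  assoc;
  first
  [ rewrite -> H
  | lazymatch type of H with
    | @eq (@hom ?D _ ?y) ?l ?r =>
      let H' := fresh in
      assert (H' : forall (w : D) (k : hom y w),
                 ltac:(let a := whiskered k l in let b := whiskered k r in
                       exact (a = b)))
        by (intros ? k; transitivity (k ∘ l);
            [ | rewrite -> H]; repeat rewrite <- comp_assoc; reflexivity);
      rewrite -> H'; clear H'
    end ];
  assoc.
Ltac crwl H := crw (eq_sym H).
Ltac crw_Mf M H :=
  let H' := fresh in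
  pose proof (f_equal (Mf M) H) as H';
  repeat rewrite -> Mf_comp in H'; repeat rewrite -> comp_assoc in H';
  crw H'; clear H'.
Ltac Mf_split := repeat rewrite -> Mf_comp; assoc.

Section Category.
Context {C : Category}.

Lemma comp_cancel_r (x y z : C) (p : hom x y) (q : hom y x) (k : hom x z) :
  q ∘ p = idm x -> k ∘ q ∘ p = k.
Proof. by move=> qp; rewrite -comp_assoc qp comp_idr. Qed.

Lemma iso_epi (x y z : C) (f g : hom y z) (p : hom x y) (q : hom y x) :
  p ∘ q = idm y -> f ∘ p = g ∘ p -> f = g.
Proof. by move=> pq fg; rewrite -[f]comp_idr -[g]comp_idr -pq !comp_assoc fg. Qed.

Lemma iso_mono (x y z : C) (f g : hom x y) (p : hom y z) (q : hom z y) :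
  q ∘ p = idm y -> p ∘ f = p ∘ g -> f = g.
Proof. by move=> qp fg; rewrite -[f]comp_idl -[g]comp_idl -qp -!comp_assoc fg. Qed.

End Category.

Ltac simpl_iso := repeat progress (assoc; rewrite
  ?(comp_cancel_r _ (alpha_iso1 _ _ _ _)) ?(comp_cancel_r _ (alpha_iso2 _ _ _ _))
  ?(comp_cancel_r _ (lam_iso1 _ _)) ?(comp_cancel_r _ (lam_iso2 _ _))
  ?(comp_cancel_r _ (rho_iso1 _ _)) ?(comp_cancel_r _ (rho_iso2 _ _))
  ?(comp_cancel_r _ (sym_inv _ _ _))
  ?alpha_iso1 ?alpha_iso2 ?lam_iso1 ?lam_iso2 ?rho_iso1 ?rho_iso2 ?sym_inv
  ?tensf_id ?Mf_id ?comp_idl ?comp_idr).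

Section SymmetricMonoidal.
Context {C : Category} {S : SymClosedMonoidal C}.
Local Notation "f ⊗ g" := (tensf S f g) (at level 35).
Local Notation I := (unitI S).

Lemma tensf_compE (a b c a' b' c' : C) (f : hom a b) (g : hom b c)
    (f' : hom a' b') (g' : hom b' c') :
  (g ⊗ g') ∘ (f ⊗ f') = (g ∘ f) ⊗ (g' ∘ f').
Proof. by rewrite tensf_comp. Qed.

Lemma tensf_compEk (a b c a' b' c' e : C) (f : hom a b) (g : hom b c)
    (f' : hom a' b') (g' : hom b' c') (k : hom _ e) :
  k ∘ (g ⊗ g') ∘ (f ⊗ f') = k ∘ ((g ∘ f) ⊗ (g' ∘ f')).
Proof. by rewrite -comp_assoc tensf_comp. Qed.

Lemma tensf_comp_l (a b c e : C) (f : hom a b) (g : hom b c) :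
  (g ∘ f) ⊗ idm e = (g ⊗ idm e) ∘ (f ⊗ idm e).
Proof. by rewrite tensf_compE comp_idl. Qed.

Lemma tensf_comp_r (a b c e : C) (f : hom a b) (g : hom b c) :
  idm e ⊗ (g ∘ f) = (idm e ⊗ g) ∘ (idm e ⊗ f).
Proof. by rewrite tensf_compE comp_idl. Qed.

Lemma tensf_split (a b c d : C) (f : hom a b) (g : hom c d) :
  f ⊗ g = (f ⊗ idm d) ∘ (idm a ⊗ g).
Proof. by rewrite tensf_compE comp_idl comp_idr. Qed.

Lemma tensf_interchange (a b c d e : C) (f : hom a b) (g : hom c d) (k : hom _ e) :
  k ∘ (f ⊗ idm d) ∘ (idm a ⊗ g) = k ∘ (idm b ⊗ g) ∘ (f ⊗ idm c).
Proof. by rewrite !tensf_compEk !comp_idl !comp_idr. Qed.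

Lemma alpha_nat_r (x y z z' : C) (h : hom z z') :
  alpha S x y z' ∘ (idm (tens S x y) ⊗ h) = (idm x ⊗ (idm y ⊗ h)) ∘ alpha S x y z.
Proof. by rewrite -tensf_id alpha_nat. Qed.

Lemma rho_inv_nat (x x' : C) (f : hom x x') :
  rho_inv S x' ∘ f = (f ⊗ idm I) ∘ rho_inv S x.
Proof. rewrite -[LHS]comp_idr -(rho_iso2 S x). crwl (rho_nat S f). by simpl_iso. Qed.

Lemma lam_faithful (x y : C) (f g : hom x y) : idm I ⊗ f = idm I ⊗ g -> f = g.
Proof.
move=> fg; rewrite -[f]comp_idr -[g]comp_idr -(lam_iso2 S x).
crwl (lam_nat S f); crw fg; by crw (lam_nat S g).
Qed.

Lemma rho_faithful (x y : C) (f g : hom x y) : f ⊗ idm I = g ⊗ idm I -> f = g.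
Proof.
move=> fg; rewrite -[f]comp_idr -[g]comp_idr -(rho_iso2 S x).
crwl (rho_nat S f); crw fg; by crw (rho_nat S g).
Qed.

Lemma curry_precomp (x x' b c : C) (f : hom (tens S x b) c) (g : hom x' x) :
  curry S f ∘ g = curry S (f ∘ (g ⊗ idm b)).
Proof.
rewrite -[LHS]curry_eta; congr (curry S _).
by rewrite -[in RHS](curry_beta f) -comp_assoc tensf_compE comp_idl.
Qed.

Lemma expo_hom_ext (x b c : C) (g h : hom x (expo S b c)) :
  app S b c ∘ (g ⊗ idm b) = app S b c ∘ (h ⊗ idm b) -> g = h.
Proof. by move=> gh; rewrite -(curry_eta g) -(curry_eta h) gh. Qed.

Lemma lam_tens (x y : C) : lam S (tens S x y) ∘ alpha S I x y = lam S x ⊗ idm y.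
Proof.
apply: lam_faithful.
apply: (@iso_epi _ _ _ _ _ _ (alpha S I (tens S I x) y ∘ (alpha S I I x ⊗ idm y))
   ((alpha_inv S I I x ⊗ idm y) ∘ alpha_inv S I (tens S I x) y)).
  by assoc; rewrite tensf_compEk; simpl_iso.
transitivity (alpha S I x y ∘ ((rho S I ⊗ idm x) ⊗ idm y)).
  rewrite -[idm I]comp_idl -tensf_compE. crwl (pentagon S I I x y).
  crw (triangle S I (tens S x y)). crw (alpha_nat S (rho S I) (idm x) (idm y)).
  by rewrite tensf_id.
crwl (alpha_nat S (idm I) (lam S x) (idm y)). crw tensf_compEk.
by rewrite comp_idl triangle.
Qed.

Lemma lam_sym (x : C) : lam S x ∘ sym S x I = rho S x.
Proof.
apply: rho_faithful.
apply: (@iso_mono _ _ _ _ _ _ (sym S x I) (sym S I x)); first by rewrite sym_inv.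
symmetry.
rewrite -[in LHS](triangle S x I). crw (sym_nat S (idm x) (lam S I)).
rewrite -lam_tens. crw (hexagon S x I I). crw (lam_nat S (sym S x I)).
crw (lam_tens x I). by rewrite tensf_compEk comp_idl.
Qed.

Lemma rho_sym (x : C) : rho S x ∘ sym S I x = lam S x.
Proof. by rewrite -lam_sym -comp_assoc sym_inv comp_idr. Qed.

Lemma sym_alpha_hexagon (x y z : C) :
  sym S x (tens S y z) ∘ alpha S x y z =
  alpha_inv S y z x ∘ (idm y ⊗ sym S x z) ∘ alpha S y x z ∘ (sym S x y ⊗ idm z).
Proof. rewrite -[LHS]comp_idl -(alpha_iso1 S y z x). by crw (hexagon S x y z). Qed.

Lemma alpha_sym_hexagon (x y z : C) :
  alpha S y z x ∘ sym S x (tens S y z) =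
  (idm y ⊗ sym S x z) ∘ alpha S y x z ∘ (sym S x y ⊗ idm z) ∘ alpha_inv S x y z.
Proof. rewrite -[LHS]comp_idr -(alpha_iso2 S x y z). by crw (hexagon S x y z). Qed.

Lemma sym_tens_l (x y z : C) :
  sym S (tens S y z) x = alpha S x y z ∘ (sym S y x ⊗ idm z)
    ∘ alpha_inv S y x z ∘ (idm y ⊗ sym S z x) ∘ alpha S y z x.
Proof.
set G := alpha S x y z ∘ _ ∘ _ ∘ _ ∘ _.
have GK : G ∘ sym S x (tens S y z) = idm _.
  rewrite /G. crw (alpha_sym_hexagon x y z).
  rewrite tensf_compEk sym_inv comp_idl tensf_id comp_idr. simpl_iso.
  rewrite tensf_compEk sym_inv comp_idl tensf_id comp_idr. by simpl_iso.
rewrite -[LHS]comp_idl -GK. by simpl_iso.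
Qed.

Lemma sym_tens_l_alpha_inv (x y z : C) :
  sym S (tens S y z) x ∘ alpha_inv S y z x ∘ (idm y ⊗ sym S x z)
  = alpha S x y z ∘ (sym S y x ⊗ idm z) ∘ alpha_inv S y x z.
Proof.
rewrite (sym_tens_l x y z). simpl_iso.
by rewrite (tensf_compEk (idm _) (idm _) (sym S x z) (sym S z x)) sym_inv
  comp_idl tensf_id comp_idr.
Qed.

Lemma sym_tens_r_reverse (x y z : C) :
  alpha S z y x ∘ (sym S y z ⊗ idm x) ∘ sym S x (tens S y z) ∘ alpha S x y z
  = (idm z ⊗ sym S x y) ∘ sym S (tens S x y) z.
Proof.
crw (sym_alpha_hexagon x y z). crwl (sym_nat S (sym S x y) (idm z)).
by rewrite (sym_tens_l z y x); assoc.
Qed.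

Lemma sym_tens_l_reverse (x y z : C) :
  sym S (tens S y z) x ∘ (sym S z y ⊗ idm x) ∘ alpha_inv S z y x
    ∘ (idm z ⊗ sym S x y)
  = alpha S x y z ∘ sym S z (tens S x y).
Proof.
crw (sym_nat S (sym S z y) (idm x)). rewrite (sym_tens_l x z y). simpl_iso.
rewrite (tensf_compEk (idm _) (idm _) (sym S x y) (sym S y x)) sym_inv comp_idl
  tensf_id comp_idr.
by rewrite (alpha_sym_hexagon z x y).
Qed.

End SymmetricMonoidal.

Section Strength.
Context {C : Category} {S : SymClosedMonoidal C} (M : StrongMonad S).
Local Notation "f ⊗ g" := (tensf S f g) (at level 35).
Local Notation I := (unitI S).

Lemma tau_nat_l (x x' z : C) (f : hom x x') :
  tau M x' z ∘ (Mf M f ⊗ idm z) = Mf M (f ⊗ idm z) ∘ tau M x z.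
Proof. exact: (tau_nat M f (idm z)). Qed.

Lemma tau_nat_r (x y y' : C) (g : hom y y') :
  tau M x y' ∘ (idm (Mo M x) ⊗ g) = Mf M (idm x ⊗ g) ∘ tau M x y.
Proof. rewrite -(Mf_id M x). exact: (tau_nat M (idm x) g). Qed.

Lemma tau_assoc_inv (x y z : C) :
  tau M (tens S x y) z ∘ (tau M x y ⊗ idm z)
  = Mf M (alpha_inv S x y z) ∘ tau M x (tens S y z) ∘ alpha S (Mo M x) y z.
Proof. crw (tau_assoc M x y z). crw_Mf M (alpha_iso1 S x y z). by simpl_iso. Qed.

Lemma tau'_nat (x x' y y' : C) (f : hom x x') (g : hom y y') :
  tau' M x' y' ∘ (f ⊗ Mf M g) = Mf M (f ⊗ g) ∘ tau' M x y.
Proof.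
rewrite /tau'. crw (sym_nat S f (Mf M g)). crw (tau_nat M g f).
by crw_Mf M (sym_nat S g f).
Qed.

Lemma tau'_nat_l (x x' y : C) (f : hom x x') :
  tau' M x' y ∘ (f ⊗ idm (Mo M y)) = Mf M (f ⊗ idm y) ∘ tau' M x y.
Proof. rewrite -(Mf_id M y). exact: tau'_nat. Qed.

Lemma tau'_nat_r (x y y' : C) (g : hom y y') :
  tau' M x y' ∘ (idm x ⊗ Mf M g) = Mf M (idm x ⊗ g) ∘ tau' M x y.
Proof. exact: tau'_nat. Qed.

Lemma tau'_eta (x y : C) : tau' M x y ∘ (idm x ⊗ eta M y) = eta M (tens S x y).
Proof.
rewrite /tau'. crw (sym_nat S (idm x) (eta M y)). crw (tau_eta M y x).
crwl (eta_nat M (sym S y x)). by simpl_iso.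
Qed.

Lemma tau'_mu (x y : C) :
  tau' M x y ∘ (idm x ⊗ mu M y)
  = mu M (tens S x y) ∘ Mf M (tau' M x y) ∘ tau' M x (Mo M y).
Proof.
rewrite /tau' !Mf_comp. assoc.
crw (sym_nat S (idm x) (mu M y)). crw (tau_mu M y x). crwl (mu_nat M (sym S y x)).
crw_Mf M (sym_inv S (Mo M y) x). by simpl_iso.
Qed.

Lemma tau'_unit (x : C) : Mf M (lam S x) ∘ tau' M I x = lam S (Mo M x).
Proof.
rewrite /tau'. crw_Mf M (lam_sym (S:=S) x). crw (tau_unit M x). by rewrite rho_sym.
Qed.

Lemma tau'_tau_assoc (x y z : C) :
  tau' M x (tens S y z) ∘ (idm x ⊗ tau M y z) ∘ alpha S x (Mo M y) z
  = Mf M (alpha S x y z) ∘ tau M (tens S x y) z ∘ (tau' M x y ⊗ idm z).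
Proof.
rewrite /tau' !tensf_comp_l. assoc.
crw (sym_nat S (idm x) (tau M y z)). crw (tau_assoc_inv y z x).
crw (hexagon S x (Mo M y) z). crw (tau_nat_r y (sym S x z)).
crw_Mf M (sym_tens_l_alpha_inv (S:=S) x y z).
crw (tau_nat_l z (sym S y x)). by crw (tau_assoc_inv y x z).
Qed.

Lemma tau'_assoc (x y z : C) :
  Mf M (alpha S x y z) ∘ tau' M (tens S x y) z
  = tau' M x (tens S y z) ∘ (idm x ⊗ tau' M y z) ∘ alpha S x y (Mo M z).
Proof.
rewrite /tau' !tensf_comp_r. assoc.
crw (sym_nat S (idm x) (Mf M (sym S z y))). crw (tau_nat_l x (sym S z y)).
crw (sym_nat S (idm x) (tau M z y)). crw (sym_nat S (idm x) (sym S y (Mo M z))).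
crw (tau_assoc_inv z y x). crw (sym_tens_r_reverse (S:=S) x y (Mo M z)).
crw (tau_nat_r z (sym S x y)). by crw_Mf M (sym_tens_l_reverse (S:=S) x y z).
Qed.

Lemma tau_tau'_assoc (x y z : C) :
  tau M (tens S x y) z ∘ (tau' M x y ⊗ idm z)
  = Mf M (alpha_inv S x y z) ∘ tau' M x (tens S y z) ∘ (idm x ⊗ tau M y z)
    ∘ alpha S x (Mo M y) z.
Proof.
rewrite -[LHS]comp_idl -(Mf_id M) -(alpha_iso1 S x y z) Mf_comp.
by crwl (tau'_tau_assoc x y z).
Qed.

End Strength.

Section KleisliExponential.
Context {C : Category} {S : SymClosedMonoidal C} (M : StrongMonad S) (A : C).
Local Notation "f ⊗ g" := (tensf S f g) (at level 35).
Local Notation K := (KA M A).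
Local Notation ev := (app S A (Mo M A)).

Lemma app_kcomp : ev ∘ (kcomp M A ⊗ idm A) = wK M A.
Proof. exact: curry_beta. Qed.

Lemma app_kident : ev ∘ (kident M A ⊗ idm A) = eta M A ∘ lam S A.
Proof. exact: curry_beta. Qed.

Lemma qK_EM_algebra : is_EM_algebra M (curry S (qK M A)).
Proof.
split; apply: expo_hom_ext; rewrite ?curry_precomp !curry_beta.
  rewrite tensf_id comp_idr /qK. crw (tau_eta M K A). crwl (eta_nat M ev).
  by rewrite mu_eta_l comp_idl.
set c := curry S (qK M A); rewrite {1}/qK.
crw (tau_nat_l M A c). crw_Mf M (curry_beta (qK M A)).
rewrite /qK; Mf_split.
crw (tau_mu M K A). crwl (mu_nat M ev). by crw (mu_assoc M A).
Qed.

Lemma kcomp_assoc :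
  kcomp M A ∘ (kcomp M A ⊗ idm K)
  = kcomp M A ∘ (idm K ⊗ kcomp M A) ∘ alpha S K K K.
Proof.
apply: expo_hom_ext. rewrite !tensf_comp_l. assoc. rewrite app_kcomp /wK.
crw (alpha_nat S (kcomp M A) (idm K) (idm A)). rewrite tensf_id.
assoc; rewrite -(tensf_interchange (kcomp M A) ev).
crw (tau'_nat_l M A (kcomp M A)). crw_Mf M app_kcomp.
rewrite /wK; Mf_split.
crw (tau'_assoc M K K A). crwl (tau'_nat_r M K ev). crw (mu_assoc M A).
crw (mu_nat M ev). crwl (tau'_mu M K A). crw (alpha_nat_r (S:=S) K K ev).
crw (pentagon S K K K A).
crw (alpha_nat S (idm K) (kcomp M A) (idm A)).
rewrite (tensf_compEk (idm K) (idm K) (kcomp M A ⊗ idm A) ev).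
by rewrite comp_idl app_kcomp /wK !tensf_comp_r; assoc.
Qed.

Lemma kcomp_kident_l : kcomp M A ∘ (kident M A ⊗ idm K) = lam S K.
Proof.
apply: expo_hom_ext. rewrite !tensf_comp_l. assoc. rewrite app_kcomp /wK.
crw (alpha_nat S (kident M A) (idm K) (idm A)). rewrite tensf_id.
assoc; rewrite -(tensf_interchange (kident M A) ev).
crw (tau'_nat_l M A (kident M A)). crw_Mf M app_kident.
crw (mu_eta_r M A). crw (tau'_unit M A). crw (lam_nat S ev).
crw (lam_tens (S:=S) K A). by rewrite comp_idl.
Qed.

Lemma kcomp_kident_r : kcomp M A ∘ (idm K ⊗ kident M A) = rho S K.
Proof.
apply: expo_hom_ext. rewrite !tensf_comp_l. assoc. rewrite app_kcomp /wK.
crw (alpha_nat S (idm K) (kident M A) (idm A)).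
rewrite (tensf_compEk (idm K) (idm K) (kident M A ⊗ idm A) ev).
rewrite comp_idl app_kident tensf_comp_r. assoc.
crw (tau'_eta M K A). crwl (eta_nat M ev). crw (mu_eta_l M A).
crw (triangle S K A). by rewrite comp_idl.
Qed.

Lemma kleisli_monoid : is_monoid (kcomp M A) (kident M A).
Proof.
by split; [exact: kcomp_assoc | split; [exact: kcomp_kident_l | exact: kcomp_kident_r]].
Qed.

Lemma wK_tau' :
  mu M A ∘ Mf M (wK M A) ∘ tau M (tens S K K) A ∘ (tau' M K K ⊗ idm A)
  = mu M A ∘ Mf M ev ∘ tau' M K A ∘ (idm K ⊗ qK M A) ∘ alpha S K (Mo M K) A.
Proof.
crw (tau_tau'_assoc M K K A). rewrite /wK; Mf_split.
crw_Mf M (alpha_iso2 S K K A). simpl_iso.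
crwl (tau'_nat_r M K ev). crw (mu_assoc M A). crw (mu_nat M ev).
crwl (tau'_mu M K A). by rewrite /qK !tensf_comp_r; assoc.
Qed.

Lemma qK_kcomp_sym (HM : commutative_monad M) :
  curry S (qK M A) ∘ Mf M (kcomp M A) ∘ mu M (tens S K K) ∘ Mf M (tau' M K K)
    ∘ tau M K (Mo M K)
  = kcomp M A ∘ (curry S (qK M A) ⊗ curry S (qK M A)).
Proof.
apply: expo_hom_ext. rewrite !tensf_comp_l. assoc.
set c := curry S (qK M A).
rewrite curry_beta app_kcomp /qK /wK.
crw (tau_nat_l M A (kcomp M A)). crw_Mf M app_kcomp. crw (tau_mu M (tens S K K) A).
crw (tau_nat_l M A (tau' M K K)). crw (tau_assoc_inv M K (Mo M K) A).
crwl (mu_nat M (wK M A)). crwl (mu_assoc M A). crw_Mf M wK_tau'.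
crw_Mf M (alpha_iso2 S K (Mo M K) A). simpl_iso.
crwl (tau_nat_r M K (qK M A)). rewrite /qK; Mf_split.
crw (mu_assoc M A). crw (mu_nat M ev).
(* Commutativity of M swaps the order of the two strengths. *)
crwl (HM K A).
crw (alpha_nat S c c (idm A)).
rewrite (tensf_compEk c (idm K) (c ⊗ idm A) ev) comp_idl curry_beta.
rewrite (tensf_split c (qK M A)).
assoc. crw (tau'_nat_l M A c). crw_Mf M (curry_beta (qK M A)).
rewrite /qK; Mf_split. crw (mu_assoc M A). by crw (mu_nat M ev).
Qed.

Lemma kleisli_sym_EM_monoid (HM : commutative_monad M) :
  is_sym_EM_monoid M (curry S (qK M A)) (kcomp M A) (kident M A).
Proof.
split; first exact: qK_EM_algebra.
by split; [exact: kleisli_monoid | exact: qK_kcomp_sym].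
Qed.

End KleisliExponential.

Section SymEMMonoid.
Context {C : Category} {S : SymClosedMonoidal C} (M : StrongMonad S).
Local Notation "f ⊗ g" := (tensf S f g) (at level 35).
Variables (E : C) (a : hom (Mo M E) E) (m : hom (tens S E E) E) (u : hom (unitI S) E).
Hypothesis Hmon : is_sym_EM_monoid M a m u.

Lemma sym_EM_monoid_mul_act_l : m ∘ (a ⊗ idm E) = a ∘ Mf M m ∘ tau M E E.
Proof.
case: Hmon => [[a_eta _] [_ m_act]].
transitivity (m ∘ (a ⊗ a) ∘ (idm (Mo M E) ⊗ eta M E)).
  by rewrite -comp_assoc tensf_compE comp_idr a_eta.
rewrite -m_act. crw (tau_nat_r M E (eta M E)). crw_Mf M (tau'_eta M E E).
crw (mu_eta_r M (tens S E E)). by rewrite comp_idr.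
Qed.

Lemma sym_EM_monoid_mul_act_r : m ∘ (idm E ⊗ a) = a ∘ Mf M m ∘ tau' M E E.
Proof.
case: Hmon => [[a_eta _] [_ m_act]].
transitivity (m ∘ (a ⊗ a) ∘ (eta M E ⊗ idm (Mo M E))).
  by rewrite -comp_assoc tensf_compE comp_idr a_eta.
rewrite -m_act. crw (tau_eta M E (Mo M E)). crwl (eta_nat M (tau' M E E)).
crw (mu_eta_l M (tens S E E)). by rewrite comp_idr.
Qed.

End SymEMMonoid.

Section FreeSymEMMonoid.
Context {C : Category} {S : SymClosedMonoidal C} (M : StrongMonad S) (A : C).
Local Notation "f ⊗ g" := (tensf S f g) (at level 35).
Local Notation K := (KA M A).
Local Notation ev := (app S A (Mo M A)).
Variables (m : hom (tens S (Mo M A) (Mo M A)) (Mo M A)) (u : hom (unitI S) (Mo M A)).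
Hypothesis Hmon : is_sym_EM_monoid M (mu M A) m u.
Local Notation s := (m ∘ (idm (Mo M A) ⊗ eta M A)).

Lemma free_mul_from_unit :
  mu M A ∘ Mf M m ∘ Mf M (idm (Mo M A) ⊗ eta M A) ∘ tau' M (Mo M A) A = m.
Proof.
crwl (tau'_nat_r M (Mo M A) (eta M A)).
crwl (sym_EM_monoid_mul_act_r Hmon).
by rewrite -comp_assoc tensf_compE comp_idl mu_eta_r tensf_id comp_idr.
Qed.

Lemma curry_unit_act_EM_morphism :
  curry S s ∘ mu M A = curry S (qK M A) ∘ Mf M (curry S s).
Proof.
apply: expo_hom_ext. rewrite !curry_precomp !curry_beta /qK.
crw (tau_nat_l M A (curry S s)). crw_Mf M (curry_beta s).
assoc; rewrite -(tensf_interchange (mu M A) (eta M A)).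
crw (sym_EM_monoid_mul_act_l Hmon). by crw (tau_nat_r M (Mo M A) (eta M A)).
Qed.

Lemma curry_unit_act_mul : curry S s ∘ m = kcomp M A ∘ (curry S s ⊗ curry S s).
Proof.
case: Hmon => _ [[m_assoc _] _].
apply: expo_hom_ext. rewrite !curry_precomp !curry_beta /wK.
assoc; rewrite -(tensf_interchange m (eta M A)).
crw m_assoc. crw (alpha_nat_r (S:=S) (Mo M A) (Mo M A) (eta M A)).
rewrite (tensf_compEk (idm _) (idm _) (idm _ ⊗ eta M A) m) comp_idl.
crw (alpha_nat S (curry S s) (curry S s) (idm A)).
rewrite (tensf_compEk (curry S s) (idm K) (curry S s ⊗ idm A) ev) comp_idl curry_beta.
rewrite (tensf_split (curry S s) s). assoc.
crw (tau'_nat_l M A (curry S s)). crw_Mf M (curry_beta s).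
by crw free_mul_from_unit.
Qed.

Lemma curry_unit_act_unit : curry S s ∘ u = kident M A.
Proof.
case: Hmon => _ [[_ [m_unit_l _]] _].
apply: expo_hom_ext. rewrite !curry_precomp !curry_beta.
assoc; rewrite -(tensf_interchange u (eta M A)).
crw m_unit_l. by rewrite lam_nat.
Qed.

Definition apply_to_unit : hom K (Mo M A) :=
  mu M A ∘ Mf M ev ∘ tau' M K A ∘ (idm K ⊗ u) ∘ rho_inv S K.

Lemma apply_to_unit_retraction : apply_to_unit ∘ curry S s = idm (Mo M A).
Proof.
case: Hmon => _ [[_ [_ m_unit_r]] _].
rewrite /apply_to_unit. crw (rho_inv_nat (S:=S) (curry S s)).
rewrite -(tensf_interchange (curry S s) u).
crw (tau'_nat_l M A (curry S s)). crw_Mf M (curry_beta s).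
crw free_mul_from_unit. crw m_unit_r. by rewrite rho_iso2.
Qed.

End FreeSymEMMonoid.

Theorem theorem22 (C : Category) (S : SymClosedMonoidal C)
  (M : StrongMonad S) (HM : commutative_monad M) (A : C)
  (m : hom (tens S (Mo M A) (Mo M A)) (Mo M A)) (u : hom (unitI S) (Mo M A))
  (Hmon : is_sym_EM_monoid M (mu M A) m u) :
  let s := m ∘ tensf S (idm (Mo M A)) (eta M A) in
  sym_EM_monoid_morphism M (mu M A) m u
    (curry S (qK M A)) (kcomp M A) (kident M A) (curry S s)
  /\ exists r : hom (KA M A) (Mo M A), r ∘ curry S s = idm (Mo M A).
Proof.
move=> s; split.
  split; first exact: Hmon.
  split; first exact: kleisli_sym_EM_monoid HM.
  split; first exact: curry_unit_act_EM_morphism Hmon.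
  by split; [exact: curry_unit_act_mul Hmon | exact: curry_unit_act_unit Hmon].
exists (apply_to_unit u).
exact: apply_to_unit_retraction Hmon.
Qed.
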